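(* In every run of the algorithm described in the context, at every time and for all $i,j\in\{1,\dots,n\}$, we have $w\_sync_i[i]\ge w\_sync_j[i]$.
   Context: Model. There are $n$ asynchronous processes $p_1,\dots,p_n$, of which up to $t<n/2$ may crash; a process runs its algorithm correctly until it crashes. Each ordered pair of processes is linked by a reliable (no loss, corruption, duplication or creation), asynchronous, not necessarily FIFO channel. $p_w$ is the single writer, invoking writes sequentially; $v_0$ is the initial value. Messages: $\textsc{write}(b,v)$ with $b\in\{0,1\}$, which stands for the two types $\textsc{write0}(v)$ and $\textsc{write1}(v)$; $\textsc{read}()$; $\textsc{proceed}()$. Variables of $p_i$. These are: $history_i$ with $history_i[0]=v_0$; $w\_sync_i[1..n]$, initially all $0$; $r\_sync_i[1..n]$, initially all $0$. $\mathsf{write}(v)$ by $p_w$: $wsn\gets w\_sync_w[w]+1$; $w\_sync_w[w]\gets wsn$; $history_w[wsn]\gets v$. Send $\textsc{write}(wsn\bmod 2,v)$ to each $p_j$ with $w\_sync_w[j]=wsn-1$. Wait until at least $n-t$ indices $j$ have $w\_sync_w[j]=wsn$. Return. $\mathsf{read}()$ by $p_i$: $r\_sync_i[i]\gets r\_sync_i[i]+1$ and call the new value $rsn$. Send $\textsc{read}()$ to all $p_j$ with $j\ne i$. Wait until at least $n-t$ indices $j$ have $r\_sync_i[j]=rsn$. Let $sn\gets w\_sync_i[i]$. Wait until at least $n-t$ indices $j$ have $w\_sync_i[j]\ge sn$. Return $history_i[sn]$. On receipt of $\textsc{write}(b,v)$ from $p_j$ at $p_i$: Wait until $b=(w\_sync_i[j]+1)\bmod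 2$. Let $wsn\gets w\_sync_i[j]+1$. If $wsn=w\_sync_i[i]+1$, then set $w\_sync_i[i]\gets wsn$ and $history_i[wsn]\gets v$, and send $\textsc{write}(wsn\bmod 2,v)$ to each $p_\ell$ with $w\_sync_i[\ell]=wsn-1$. Else, if $wsn<w\_sync_i[i]$, send $\textsc{write}((wsn+1)\bmod 2,history_i[wsn+1])$ to $p_j$. Finally set $w\_sync_i[j]\gets wsn$. On receipt of $\textsc{read}()$ from $p_j$ at $p_i$: Let $sn\gets w\_sync_i[i]$; wait until $w\_sync_i[j]\ge sn$; send $\textsc{proceed}()$ to $p_j$. On receipt of $\textsc{proceed}()$ from $p_j$ at $p_i$: $r\_sync_i[j]\gets r\_sync_i[j]+1$. Message handlers run concurrently; a waiting handler does not block the reception of other messages. *)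

From mathcomp Require Import all_boot.
Set Implicit Arguments.
Unset Strict Implicit.
Unset Printing Implicit Defensive.

(* Message payloads: WRITE(b,v) with b = true standing for WRITE1 (odd sequence
   number) and b = false for WRITE0; READ(); PROCEED(). *)
Inductive payload (V : Type) : Type :=
| MWrite of bool & V
| MRead
| MProceed.
Arguments MRead {V}.
Arguments MProceed {V}.

Inductive opstatus : Type :=
| Idle
| OpWrite of nat     (* waiting in write, with sequence number wsn *)
| OpRead1 of nat     (* waiting for n-t PROCEED, with rsn *)
| OpRead2 of nat.    (* waiting for n-t w_sync >= sn, with sn *)

Section Alg.
Variables (V : Type) (n t : nat) (w : 'I_n) (v0 : V).

Record msg := Msg { src : 'I_n; dst : 'I_n; pay : payload V }.

Record lstate := LState {
  hist : nat -> V;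
  wsync : 'I_n -> nat;
  rsync : 'I_n -> nat;
  op : opstatus;
  wpend : seq ('I_n * bool * V);(* received WRITE messages whose handler waits *)
  rpend : seq ('I_n * nat);     (* received READ handlers waiting: (sender, sn) *)
  crashed : bool }.

Record config := Config { st : 'I_n -> lstate; net : seq msg }.

Definition upd (T : Type) (f : 'I_n -> T) (k : 'I_n) (x : T) : 'I_n -> T :=
  fun l => if l == k then x else f l.
Definition updn (T : Type) (f : nat -> T) (k : nat) (x : T) : nat -> T :=
  fun m => if m == k then x else f m.

Definition bcast (i : 'I_n) (P : pred 'I_n) (p : payload V) : seq msg :=
  [seq Msg i l p | l <- enum 'I_n & P l].

Definition ncrashed (s : 'I_n -> lstate) : nat :=
  count (fun k => crashed (s k)) (enum 'I_n).

Definition init_lstate : lstate :=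
  LState (fun _ => v0) (fun _ => 0) (fun _ => 0) Idle [::] [::] false.

Definition init_config : config := Config (fun _ => init_lstate) [::].

Inductive step : config -> config -> Prop :=
| StCrash s N i :
    ~~ crashed (s i) -> ncrashed s < t ->
    let x := s i in
    step (Config s N)
         (Config (upd s i (LState (hist x) (wsync x) (rsync x) (op x)
                                  (wpend x) (rpend x) true)) N)
| StInvokeWrite s N v :
    let x := s w in
    ~~ crashed x -> op x = Idle ->
    let wsn := (wsync x w).+1 in
    let ws := upd (wsync x) w wsn in
    step (Config s N)
         (Config (upd s w (LState (updn (hist x) wsn v) ws (rsync x)
                                  (OpWrite wsn) (wpend x) (rpend x) false))
                 (N ++ bcast w (fun j => ws j == wsn.-1) (MWrite (odd wsn) v)))
| StReturnWrite s N wsn :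
    let x := s w in
    ~~ crashed x -> op x = OpWrite wsn ->
    n - t <= count (fun j => wsync x j == wsn) (enum 'I_n) ->
    step (Config s N)
         (Config (upd s w (LState (hist x) (wsync x) (rsync x) Idle
                                  (wpend x) (rpend x) false)) N)
| StInvokeRead s N i :
    let x := s i in
    ~~ crashed x -> op x = Idle ->
    let rsn := (rsync x i).+1 in
    step (Config s N)
         (Config (upd s i (LState (hist x) (wsync x) (upd (rsync x) i rsn)
                                  (OpRead1 rsn) (wpend x) (rpend x) false))
                 (N ++ bcast i (fun j => j != i) MRead))
| StReadPhase2 s N i rsn :
    let x := s i in
    ~~ crashed x -> op x = OpRead1 rsn ->
    n - t <= count (fun j => rsync x j == rsn) (enum 'I_n) ->
    step (Config s N)
         (Config (upd s i (LState (hist x) (wsync x) (rsync x)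
                                  (OpRead2 (wsync x i)) (wpend x) (rpend x) false)) N)
| StReturnRead s N i sn :
    let x := s i in
    ~~ crashed x -> op x = OpRead2 sn ->
    n - t <= count (fun j => sn <= wsync x j) (enum 'I_n) ->
    (* the read returns hist x sn *)
    step (Config s N)
         (Config (upd s i (LState (hist x) (wsync x) (rsync x) Idle
                                  (wpend x) (rpend x) false)) N)
| StDeliverWrite s N1 N2 j i b v :
    let x := s i in
    ~~ crashed x ->
    step (Config s (N1 ++ Msg j i (MWrite b v) :: N2))
         (Config (upd s i (LState (hist x) (wsync x) (rsync x) (op x)
                                  (rcons (wpend x) (j, b, v)) (rpend x) false))
                 (N1 ++ N2))
| StDeliverRead s N1 N2 j i :
    let x := s i in
    ~~ crashed x ->
    step (Config s (N1 ++ Msg j i MRead :: N2))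
         (Config (upd s i (LState (hist x) (wsync x) (rsync x) (op x)
                                  (wpend x) (rcons (rpend x) (j, wsync x i)) false))
                 (N1 ++ N2))
| StDeliverProceed s N1 N2 j i :
    let x := s i in
    ~~ crashed x ->
    step (Config s (N1 ++ Msg j i MProceed :: N2))
         (Config (upd s i (LState (hist x) (wsync x) (upd (rsync x) j (rsync x j).+1)
                                  (op x) (wpend x) (rpend x) false))
                 (N1 ++ N2))
| StWriteHandlerAdopt s N i P1 P2 j b v :
    let x := s i in
    ~~ crashed x -> wpend x = P1 ++ (j, b, v) :: P2 ->
    b = odd (wsync x j).+1 ->
    let wsn := (wsync x j).+1 in
    wsn = (wsync x i).+1 ->
    let ws1 := upd (wsync x) i wsn in
    step (Config s N)
         (Config (upd s i (LState (updn (hist x) wsn v) (upd ws1 j wsn) (rsync x)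
                                  (op x) (P1 ++ P2) (rpend x) false))
                 (N ++ bcast i (fun l => ws1 l == wsn.-1) (MWrite (odd wsn) v)))
| StWriteHandlerOther s N i P1 P2 j b v :
    let x := s i in
    ~~ crashed x -> wpend x = P1 ++ (j, b, v) :: P2 ->
    b = odd (wsync x j).+1 ->
    let wsn := (wsync x j).+1 in
    wsn <> (wsync x i).+1 ->
    step (Config s N)
         (Config (upd s i (LState (hist x) (upd (wsync x) j wsn) (rsync x)
                                  (op x) (P1 ++ P2) (rpend x) false))
                 (N ++ (if wsn < wsync x i
                        then [:: Msg i j (MWrite (odd wsn.+1) (hist x wsn.+1))]
                        else [::])))
| StReadHandler s N i P1 P2 j sn :
    let x := s i in
    ~~ crashed x -> rpend x = P1 ++ (j, sn) :: P2 -> sn <= wsync x j ->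
    step (Config s N)
         (Config (upd s i (LState (hist x) (wsync x) (rsync x) (op x)
                                  (wpend x) (P1 ++ P2) false))
                 (N ++ [:: Msg i j MProceed])).

Inductive reachable : config -> Prop :=
| ReachInit : reachable init_config
| ReachStep c c' : reachable c -> step c c' -> reachable c'.

End Alg.

(** Count, for every ordered pair of processes (i, j), the WRITE messages from i
    to j that are still in the network or waiting in a handler of j.  Process i
    sends its k-th WRITE to j exactly when it learns value k while knowing that
    j has acknowledged k - 1, so the number of WRITEs ever sent from i to j is
    min(w_sync_i[j] + 1, w_sync_i[i]); each of them is either in flight or has
    incremented w_sync_j[i].  This conservation law is an inductive invariant,
    and it bounds w_sync_j[i] by w_sync_i[i]. *)

From mathcomp Require Import all_boot zify.

Set Implicit Arguments.
Unset Strict Implicit.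
Unset Printing Implicit Defensive.

Section WriteFlow.
Variables (V : Type) (n t : nat) (w : 'I_n) (v0 : V).

Definition is_write (p : payload V) : bool := if p is MWrite _ _ then true else false.

Definition writes_in (N : seq (msg V n)) (i j : 'I_n) : nat :=
  count (fun m => [&& src m == i, dst m == j & is_write (pay m)]) N.

Definition pending_writes (P : seq ('I_n * bool * V)) (i : 'I_n) : nat :=
  count (fun e => e.1.1 == i) P.

Definition in_flight (c : config V n) (i j : 'I_n) : nat :=
  writes_in (net c) i j + pending_writes (wpend (st c j)) i.

Definition sent_writes (c : config V n) (i j : 'I_n) : nat :=
  minn (wsync (st c i) j).+1 (wsync (st c i) i).

Record write_inv (c : config V n) : Prop := WriteInv {
  write_flow : forall i j, wsync (st c j) i + in_flight c i j = sent_writes c i j;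
  wsync_le_own : forall i j, wsync (st c i) j <= wsync (st c i) i }.

Lemma writes_in_cat N1 N2 i j :
  writes_in (N1 ++ N2) i j = writes_in N1 i j + writes_in N2 i j.
Proof. exact: count_cat. Qed.

Lemma writes_in_bcast k P p i j :
  writes_in (bcast k P p) i j = [&& k == i, is_write p & P j].
Proof.
rewrite /writes_in /bcast count_map count_filter.
set b := [&& _, _ & _].
rewrite (eq_count (a2 := fun l => b && (l == j))); last first.
  move=> l /=; rewrite /b; case: (eqVneq l j) => [->|_]; last by rewrite !andbF.
  by rewrite andbT -andbA.
case: b => /=; last by elim: (enum 'I_n).
by rewrite enumT count_uniq_mem ?index_enum_uniq ?mem_index_enum.
Qed.

Lemma pending_writes_split P1 P2 (e : 'I_n * bool * V) i :
  pending_writes (P1 ++ e :: P2) i = pending_writes (P1 ++ P2) i + (e.1.1 == i).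
Proof. by rewrite /pending_writes !count_cat /=; lia. Qed.

Lemma pending_writes_rcons P (e : 'I_n * bool * V) i :
  pending_writes (rcons P e) i = pending_writes P i + (e.1.1 == i).
Proof. by rewrite /pending_writes -cats1 count_cat /= addn0. Qed.

Lemma upd_proj (T : Type) (f : lstate V n -> T) (s : 'I_n -> lstate V n) p x k :
  f x = f (s p) -> f (upd s p x k) = f (s k).
Proof. by rewrite /upd; case: eqP => // ->. Qed.

Section Invariant.
Variable c : config V n.
Hypothesis inv : write_inv c.

Lemma wsync_le_owner i j : wsync (st c j) i <= wsync (st c i) i.
Proof. by have := write_flow inv i j; rewrite /sent_writes; lia. Qed.

Lemma in_flight_wsync_le i j : 0 < in_flight c i j -> wsync (st c j) i <= wsync (st c i) j.
Proof. by have := write_flow inv i j; rewrite /sent_writes; lia. Qed.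

Lemma in_flight_self i : in_flight c i i = 0.
Proof. by have := write_flow inv i i; rewrite /sent_writes; lia. Qed.

End Invariant.

Lemma pending_in_flight c i j P1 P2 b v :
  wpend (st c i) = P1 ++ (j, b, v) :: P2 -> 0 < in_flight c j i.
Proof. by rewrite /in_flight => ->; rewrite pending_writes_split eqxx addn1 addnS. Qed.

Lemma write_inv_frame c c' :
  write_inv c ->
  (forall k, wsync (st c' k) = wsync (st c k)) -> in_flight c' =2 in_flight c ->
  write_inv c'.
Proof.
move=> [flow le] Ews Ef.
by split=> i j; rewrite /sent_writes !Ews ?Ef; [apply: flow | apply: le].
Qed.

Lemma write_inv_upd_frame s N p x N' :
  write_inv (Config s N) -> wsync x = wsync (s p) -> wpend x = wpend (s p) ->
  writes_in N' =2 writes_in N -> write_inv (Config (upd s p x) N').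
Proof.
move=> inv Ews Epend EN; apply: (write_inv_frame inv) => [k | i j] /=.
  exact: upd_proj.
by rewrite /in_flight /= EN (upd_proj (f := @wpend V n)).
Qed.

Ltac case_indices :=
  repeat (match goal with
  | H : is_true (?a != ?a) |- _ => by rewrite eqxx in H
  | |- context[ ?a == ?b ] =>
      lazymatch type of a with
      | nat => case: (@eqP _ a b) => ?
      | _ => case: (eqVneq a b) => [?|?]; subst
      end
  | |- context[ if ?a < ?b then _ else _ ] => case: (ltnP a b) => ?
  end; rewrite ?eqxx /=).

Lemma step_write_inv c c' : write_inv c -> step t w c c' -> write_inv c'.
Proof.
move=> inv Hs; case: c c' / Hs inv => /=.
all: try by intros; apply: write_inv_upd_frame; first eassumption; rewrite //= => ? ?;
  rewrite ?writes_in_cat ?writes_in_bcast /= ?andbF ?addn0.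
- move=> s N v _ _ [flow le]; split=> a b;
    move: (flow a b) (le w b) (le a b); rewrite /in_flight /sent_writes /=;
    rewrite ?writes_in_cat ?writes_in_bcast /upd; case_indices; lia.
- move=> s N1 N2 j i b v _ inv; apply: (write_inv_frame inv) => [k | a c] /=.
    exact: upd_proj.
  rewrite /in_flight /= !writes_in_cat /= /upd; case_indices;
    rewrite ?pending_writes_rcons /=; case_indices; lia.
- move=> s N i P1 P2 j b v _ Hpend _ /eqP; rewrite eqSS => /eqP adopt inv.
  have ji : j != i.
    apply: contraTneq (pending_in_flight (c := Config s N) Hpend) => ->.
    by rewrite in_flight_self.
  split=> a c; move: (write_flow inv a c) (wsync_le_own inv a c) (wsync_le_own inv i c);
    rewrite /in_flight /sent_writes /= ?writes_in_cat ?writes_in_bcast /upd; case_indices;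
    rewrite ?Hpend ?pending_writes_split /=; case_indices; lia.
- move=> s N i P1 P2 j b v _ Hpend _ stale inv.
  have behind : wsync (s i) j < wsync (s i) i.
    have := in_flight_wsync_le inv (pending_in_flight (c := Config s N) Hpend).
    by have := wsync_le_owner inv i j; move: stale => /=; lia.
  split=> a c; move: (write_flow inv a c) (wsync_le_own inv a c) (wsync_le_own inv i c);
    rewrite /in_flight /sent_writes /= ?writes_in_cat /upd; case_indices;
    rewrite ?Hpend ?pending_writes_split /=; case_indices; lia.
Qed.

Lemma reachable_write_inv c : reachable t w v0 c -> write_inv c.
Proof.
elim=> [|c1 c2 _ IH Hs]; last exact: step_write_inv IH Hs.
by split=> i j; rewrite /in_flight /sent_writes.
Qed.

End WriteFlow.

Theorem lemma2 (V : Type) (n t : nat) (w : 'I_n) (v0 : V) :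
  t.*2 < n ->
  forall c : config V n,
    reachable t w v0 c ->
    forall i j : 'I_n, wsync (st c j) i <= wsync (st c i) i.
Proof. by move=> _ c reach_c i j; apply: wsync_le_owner (reachable_write_inv reach_c) i j. Qed.
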